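(* For every pair of positive integers $l$ and $r$, there exists a graph $G$ of order $lr$ that admits a regular distance $l$-labeling of degree $r$.
   Context: All graphs are finite and simple; $d(u,v)$ denotes the usual graph distance. For integers $m\le n$, $[m,n]=\{m,m+1,\ldots,n\}$. For a graph $G$ and a positive integer $l$, a distance $l$-labeling of $G$ is a function $f:V(G)\to[0,l]$ such that (i) $f(V(G))=[0,l]$ or $f(V(G))=[1,l]$, and (ii) whenever two distinct vertices $u,v$ satisfy $f(u)=f(v)=k$, we have $d(u,v)=k$. A distance $l$-labeling is regular of degree $r$ if for every $k\in[1,l]$ there are exactly $r$ vertices labeled $k$. *)

From mathcomp Require Import all_boot.
Set Implicit Arguments. Unset Strict Implicit. Unset Printing Implicit Defensive.

Definition simple_graph (T : finType) (e : rel T) : Prop :=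
  symmetric e /\ irreflexive e.

(* If u and v are
   in different components, gdist e u v k holds for no k (d = infinity). *)
Definition gdist (T : finType) (e : rel T) (u v : T) (k : nat) : Prop :=
  (exists p : seq T, [/\ path e u p, last u p = v & size p = k]) /\
  (forall p : seq T, path e u p -> last u p = v -> k <= size p).

Definition distance_labeling (T : finType) (e : rel T) (l : nat) (f : T -> nat)
  : Prop :=
  [/\ (forall x, f x <= l),
      (forall k, (exists x, f x = k) <-> k <= l) \/
      (forall k, (exists x, f x = k) <-> 1 <= k <= l)
    & forall u v k, u != v -> f u = k -> f v = k -> gdist e u v k].

Definition regular_distance_labeling (T : finType) (e : rel T) (l r : nat)
  (f : T -> nat) : Prop :=
  distance_labeling e l f /\
  (forall k, 1 <= k <= l -> #|[set x | f x == k]| = r).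

(* Take r chains a = 0, ..., r-1 of levels s = 0, ..., l-1 and label the
   vertex (a, s) by s + 1.  Inside a chain, vertices of the same parity are
   joined in a path (s ~ s+2); level 0 is a clique, and the hub (0, 0) is
   joined to every vertex of level 1.  Two vertices of even level 2m are then
   joined by a walk of length 2m+1 through level 0, two vertices of odd
   level 2m+1 by a walk of length 2m+2 through the hub.  No walk is shorter:
   an integer potential that changes by at most one along every edge differs
   by exactly the walk length at the two endpoints. *)
From mathcomp Require Import all_boot ssralg ssrnum ssrint zify.
Set Implicit Arguments. Unset Strict Implicit. Unset Printing Implicit Defensive.

Definition walk (T : finType) (e : rel T) (u v : T) (n : nat) : Prop :=
  exists p : seq T, [/\ path e u p, last u p = v & size p = n].

Section Walks.

Variables (T : finType) (e : rel T).

Lemma walk0 u : walk e u u 0.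
Proof. by exists [::]. Qed.

Lemma walk_cons u w v n : e u w -> walk e w v n -> walk e u v n.+1.
Proof. by move=> euw [p [pw <- <-]]; exists (w :: p); rewrite /= euw. Qed.

Lemma walk_cat u w v m n : walk e u w m -> walk e w v n -> walk e u v (m + n).
Proof.
move=> [p [pu <- <-]] [q [pq <- <-]].
by exists (p ++ q); rewrite cat_path last_cat size_cat pu pq.
Qed.

Lemma walk_rev u v n : symmetric e -> walk e u v n -> walk e v u n.
Proof.
move=> e_sym [p [pu <- <-]]; exists (rev (belast u p)).
rewrite size_rev size_belast rev_path; split=> //.
- by apply: sub_path pu => x y; rewrite /= e_sym.
- by case: p {pu} => //= y p; rewrite rev_cons last_rcons.
Qed.

Lemma potential_le_path (phi : T -> int) u p :
  (forall x y, e x y -> (phi y <= phi x + 1)%R) -> path e u p ->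
  (phi (last u p) <= phi u + (size p)%:Z)%R.
Proof.
move=> phiL; elim: p u => [|y p IH] u /=; first lia.
by case/andP=> /phiL uy /IH; lia.
Qed.

Lemma gdist_potential (phi : T -> int) u v k :
  (forall x y, e x y -> (phi y <= phi x + 1)%R) ->
  walk e u v k -> (phi u + k%:Z <= phi v)%R -> gdist e u v k.
Proof.
move=> phiL uv_k phi_uv; split=> // p pu puv.
by have := potential_le_path phiL pu; rewrite puv; lia.
Qed.

End Walks.

Definition chains_edge (a s b t : nat) : bool :=
  [|| (a == b) && ((t == s.+2) || (s == t.+2)),
      [&& s == 0, t == 0 & a != b],
      [&& a == 0, s == 0 & t == 1] | [&& b == 0, t == 0 & s == 1]].

Definition chains (r l : nat) : rel ('I_r * 'I_l) :=
  fun x y => chains_edge x.1 x.2 y.1 y.2.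
Arguments chains : clear implicits.

Lemma chains_simple r l : simple_graph (chains r l).
Proof. by split=> [x y | x]; rewrite /chains /chains_edge; lia. Qed.

(* Distances to (i, 0), resp. (i, 1), with sign flipped on chain i; the
   vertices of the other parity all take the value of the hub (0, 0). *)
Definition level0_potential (i a s : nat) : int :=
  if odd s then Posz (i != 0)
  else if a == i then (- Posz s./2)%R else Posz s./2.+1.

Definition hub_potential (i a s : nat) : int :=
  if ~~ odd s then 1%R
  else if a == i then (- Posz s./2)%R else Posz (s./2 + 2).

Lemma level0_potential_lipschitz i a s b t : chains_edge a s b t ->
  (level0_potential i b t <= level0_potential i a s + 1)%R.
Proof. rewrite /level0_potential /chains_edge; repeat case: ifP; lia. Qed.

Lemma hub_potential_lipschitz i a s b t : chains_edge a s b t ->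
  (hub_potential i b t <= hub_potential i a s + 1)%R.
Proof. rewrite /hub_potential /chains_edge; repeat case: ifP; lia. Qed.

Section ChainsDistance.

Variables r l : nat.

Local Notation G := (chains r l).

Lemma chains_walk_up (a : 'I_r) (s t : 'I_l) d :
  t = s + d.*2 :> nat -> walk G (a, s) (a, t) d.
Proof.
elim: d s => [|d IH] s st.
  have -> : s = t by apply: val_inj; rewrite /= st; lia.
  exact: walk0.
have s2_lt : s.+2 < l by have := ltn_ord t; lia.
apply: (@walk_cons _ _ _ (a, Ordinal s2_lt)); first by rewrite /chains /chains_edge /=; lia.
by apply: IH => /=; lia.
Qed.

Lemma chains_walk_down (a : 'I_r) (s t : 'I_l) d :
  t = s + d.*2 :> nat -> walk G (a, t) (a, s) d.
Proof. by move=> st; apply: walk_rev (chains_walk_up a st); case: (chains_simple r l). Qed.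

Lemma chains_gdist_even_level (i j : 'I_r) (t : 'I_l) :
  i != j -> ~~ odd t -> gdist G (i, t) (j, t) t.+1.
Proof.
move=> ij t_even; have l_gt0 : 0 < l by have := ltn_ord t; lia.
pose bottom := Ordinal l_gt0.
apply: (@gdist_potential _ _ (fun x : 'I_r * 'I_l => level0_potential i x.1 x.2)).
- by move=> [a s] [b u]; apply: level0_potential_lipschitz.
- have -> : t.+1 = t./2 + 1 + t./2 by lia.
  apply: walk_cat (chains_walk_up j (s := bottom) _); last by rewrite /=; lia.
  apply: walk_cat (chains_walk_down i (s := bottom) _) _; first by rewrite /=; lia.
  by apply: walk_cons (walk0 _ _); rewrite /chains /chains_edge /= ij; lia.
- by rewrite /level0_potential /= (negbTE t_even) eqxx val_eqE eq_sym (negbTE ij); lia.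
Qed.

Lemma chains_gdist_odd_level (i j : 'I_r) (t : 'I_l) :
  i != j -> odd t -> gdist G (i, t) (j, t) t.+1.
Proof.
move=> ij t_odd; have one_lt_l : 1 < l by have := ltn_ord t; case: (nat_of_ord t) t_odd; lia.
have r_gt0 : 0 < r by have := ltn_ord i; lia.
pose level1 := Ordinal one_lt_l; pose hub := (Ordinal r_gt0, Ordinal (ltnW one_lt_l)).
apply: (@gdist_potential _ _ (fun x : 'I_r * 'I_l => hub_potential i x.1 x.2)).
- by move=> [a s] [b u]; apply: hub_potential_lipschitz.
- have -> : t.+1 = t./2 + 1 + 1 + t./2 by lia.
  apply: walk_cat (chains_walk_up j (s := level1) _); last by rewrite /=; lia.
  apply: walk_cat (@walk_cons _ _ hub _ _ _ _ (walk0 _ _)); last first.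
    by rewrite /chains /chains_edge /=; lia.
  apply: walk_cat (chains_walk_down i (s := level1) _) _; first by rewrite /=; lia.
  by apply: walk_cons (walk0 _ _); rewrite /chains /chains_edge /=; lia.
- by rewrite /hub_potential /= t_odd eqxx val_eqE eq_sym (negbTE ij) /=; lia.
Qed.

Lemma chains_gdist_level (i j : 'I_r) (t : 'I_l) :
  i != j -> gdist G (i, t) (j, t) t.+1.
Proof.
by case t_odd: (odd t) => ij;
  [apply: chains_gdist_odd_level | apply: chains_gdist_even_level; rewrite ?t_odd].
Qed.

Lemma chains_regular_labeling :
  0 < r -> regular_distance_labeling G l r (fun x => x.2.+1).
Proof.
move=> r_gt0; split; last first.
  move=> k /andP[k_gt0 k_le_l]; have k_lt : k.-1 < l by lia.
  have -> : [set x : 'I_r * 'I_l | x.2.+1 == k] = setX setT [set Ordinal k_lt].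
    by apply/setP=> -[a s]; rewrite !inE -val_eqE /=; lia.
  by rewrite cardsX cardsT cards1 card_ord muln1.
split=> [x | | [i t] [j u] k ij <- tu]; first exact: ltn_ord.
- right=> k; split=> [[x <-] | k_in]; first by have := ltn_ord x.2; lia.
  have k_lt : k.-1 < l by lia.
  by exists (Ordinal r_gt0, Ordinal k_lt) => /=; lia.
- have ut : u = t by apply: val_inj; move: tu => /=; lia.
  subst u.
  by apply: chains_gdist_level; apply: contraNneq ij => ->.
Qed.

End ChainsDistance.

Theorem mainTheorem5 (l r : nat) (hl : 0 < l) (hr : 0 < r) :
  exists (T : finType) (e : rel T),
    [/\ simple_graph e, #|T| = l * r &
        exists f : T -> nat, regular_distance_labeling e l r f].
Proof.
exists ('I_r * 'I_l)%type, (chains r l); split.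
- exact: chains_simple.
- by rewrite card_prod !card_ord mulnC.
- by exists (fun x : 'I_r * 'I_l => x.2.+1); apply: chains_regular_labeling.
Qed.
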